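(* Suppose Assumption D holds. Let $P\in\Delta(\Theta,\mathcal{B})$, $\eta>0$, let $\pi:\Theta\to\mathbb{R}$ be bounded and measurable, let $\mathcal{E}$ be a $\sigma$-algebra, and let $\bar\pi:=\mathbb{E}_P[\pi\mid\mathcal{E}]$. Then $$\inf_Q\{\mathbb{E}_Q[\bar\pi]:D(Q\|P)\le\eta\}\ \ge\ \inf_Q\{\mathbb{E}_Q[\pi]:D(Q\|P)\le\eta\},$$ where $Q$ ranges over $\Delta(\Theta,\mathcal{B})$.
   Context: $\Theta=[\underline\theta,\bar\theta]\subset\mathbb{R}$ ($0<\underline\theta<\bar\theta$) with Borel $\sigma$-algebra $\mathcal{B}$; ''$\sigma$-algebra'' means a sub-$\sigma$-algebra of $\mathcal{B}$; $\Delta(\Theta,\mathcal{A})$ is the set of probability measures on $(\Theta,\mathcal{A})$; $P_{\mathcal{E}}$ is the restriction of $P$ to $\mathcal{E}$. A divergence $D$ assigns to each pair $Q,P$ of probability measures on a common $\sigma$-algebra a number $D(Q\|P)\in[0,\infty]$. Assumption D: for every $\sigma$-algebra $\mathcal{A}$ and $P,Q\in\Delta(\Theta,\mathcal{A})$: (D1) $D(Q\|P)=0$ if $Q=P$; (D2) if $Q\ll P$ and $dQ/dP$ is bounded, $\epsilon\mapsto D(\epsilon Q+(1-\epsilon)P\|P)$ is continuous on $[0,1]$; (D3) $D(Q\|P)<\infty$ implies $Q\ll P$; (D4) $D(Q_{\mathcal{E}}\|P_{\mathcal{E}})\le D(Q\|P)$ for every sub-$\sigma$-algebra $\mathcal{E}\subset\mathcal{A}$;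 (D5) $D(Q_{\mathcal{E}}\|P_{\mathcal{E}})=D(Q\|P)$ whenever $dQ_{\mathcal{E}}/dP_{\mathcal{E}}=dQ/dP$ $P$-a.e. *)

From HB Require Import structures.
From mathcomp Require Import all_boot all_order all_algebra.
From mathcomp Require Import all_classical all_reals all_analysis.

Set Implicit Arguments.
Unset Strict Implicit.
Unset Printing Implicit Defensive.

Import Order.TTheory GRing.Theory Num.Theory.
Local Open Scope classical_set_scope.
Local Open Scope ring_scope.

Section Defs.
Variables (R : realType) (tl tu : R) (htlu : tl < tu).

Definition Theta (h : tl < tu) : Type := {x : R | tl <= x <= tu}.
Local Notation Th := (Theta htlu).

Lemma tl_in_Theta : tl <= tl <= tu.
Proof. by rewrite lexx (ltW htlu). Qed.

HB.instance Definition _ := Choice.on Th.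
HB.instance Definition _ :=
  isPointed.Build Th (exist (fun x : R => tl <= x <= tu) tl tl_in_Theta).

Definition borel_Theta : set (set Th) :=
  [set (@proj1_sig R (fun x : R => tl <= x <= tu)) @^-1` Y
     | Y in [set Y : set R | measurable Y]].

(** "sigma-algebra" = sub-sigma-algebra of the Borel sigma-algebra of Theta. *)
Definition sub_sigma (E : set (set Th)) : Prop :=
  sigma_algebra [set: Th] E /\ E `<=` borel_Theta.

(** Probability measures on (Theta, A): the measurable type whose measurable
    sets are <<s A >> (= A when A is a sigma-algebra). *)
Notation Meas A := (g_sigma_algebraType A).

(** A divergence: to each sigma-algebra A and pair (Q, P) in Delta(Theta, A)
    a value D A Q P = D(Q||P) in [0, +oo]. *)
Definition divergence :=
  forall A : set (set Th),
    probability (Meas A) R -> probability (Meas A) R -> \bar R.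

Definition has_density (E A : set (set Th))
    (Q P : probability (Meas A) R) (f : Th -> R) : Prop :=
  [/\ measurable_fun [set: Meas E] f, (forall x, 0 <= f x) &
      forall X : set (Meas A), measurable X ->
        Q X = (\int[P]_(x in X) (f x)%:E)%E].

Definition restricts (E A : set (set Th))
    (Q' : probability (Meas E) R) (Q : probability (Meas A) R) : Prop :=
  forall X : set Th, E X -> Q' X = Q X.

Definition assumptionD (D : divergence) : Prop :=
  forall A : set (set Th), sub_sigma A ->
  forall P Q : probability (Meas A) R,
  (0 <= D A Q P)%E /\
  [/\
   (forall X : set (Meas A), measurable X -> Q X = P X) -> D A Q P = 0%E,
   (forall (f : Th -> R) (M : R), has_density A Q P f ->
      (forall x, f x <= M) ->
      forall Mix : R -> probability (Meas A) R,
        (forall (e : R) (X : set (Meas A)), 0 <= e <= 1 -> measurable X ->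
           Mix e X = (e%:E * Q X + (1 - e)%:E * P X)%E) ->
        {within `[0, 1]%classic, continuous (fun e : R => D A (Mix e) P)}),
   (D A Q P < +oo)%E -> Q `<< P,
   (forall E : set (set Th), sigma_algebra [set: Th] E -> E `<=` A ->
      forall Q' P' : probability (Meas E) R,
        restricts Q' Q -> restricts P' P -> (D E Q' P' <= D A Q P)%E) &
   (forall E : set (set Th), sigma_algebra [set: Th] E -> E `<=` A ->
      forall Q' P' : probability (Meas E) R,
        restricts Q' Q -> restricts P' P ->
        (exists f : Th -> R, has_density E Q P f) ->
        D E Q' P' = D A Q P)].

Definition cond_exp (P : probability (Meas borel_Theta) R)
    (E : set (set Th)) (pi pibar : Th -> R) : Prop :=
  [/\ measurable_fun [set: Meas E] pibar,
      P.-integrable [set: Meas borel_Theta] (fun x => (pibar x)%:E) &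
      forall X : set Th, E X ->
        (\int[P]_(x in X) (pibar x)%:E = \int[P]_(x in X) (pi x)%:E)%E].

End Defs.

Arguments borel_Theta {R tl tu} htlu.

(* Let Q satisfy D(Q||P) <= eta, so that Q << P by (D3).  Let g be the
   density of Q|E with respect to P|E; it is E-measurable, and Q' := g P agrees
   with Q on E.  As the density of Q' is E-measurable, (D5) and (D4) give
   D(Q'||P) = D(Q|E || P|E) <= D(Q||P) <= eta.  Since g is E-measurable,
   E_Q'[pi] = E_P[g pi] = E_P[g pibar] = E_Q|E[pibar] = E_Q[pibar], so every
   value in the left infimum is also a value in the right one.
   To stay within nonnegative integration, pi is shifted by its bound M and
   pibar is replaced by a version bounded by M: a conditional expectation of a
   nonnegative function is nonnegative a.e., being a.e. equal to a
   Radon-Nikodym derivative. *)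

From HB Require Import structures.
From mathcomp Require Import all_boot all_order all_algebra.
From mathcomp Require Import all_classical all_reals all_analysis measurable_realfun.
From mathcomp Require Import lra.
Import Order.TTheory GRing.Theory Num.Theory.
Local Open Scope classical_set_scope.
Local Open Scope ring_scope.
Set Implicit Arguments.
Unset Strict Implicit.
Unset Printing Implicit Defensive.

Section finite_measure_integral.
Local Open Scope ereal_scope.
Context d (T : measurableType d) (R : realType).
Variable mu : {finite_measure set T -> \bar R}.

Lemma bounded_integrable (f : T -> R) (M : R) :
  measurable_fun [set: T] f -> (forall x, (`|f x| <= M)%R) ->
  mu.-integrable [set: T] (EFin \o f).
Proof.
move=> mf fM; have := finite_measure_integrable_cst mu M measurableT.
apply: le_integrable => //; first exact/measurable_EFinP.
move=> x _ /=; rewrite lee_fin (ger0_norm (le_trans (normr_ge0 _) (fM x))).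
exact: fM.
Qed.

Lemma integrable_affine (a c : R) (f : T -> R) (D : set T) : measurable D ->
  mu.-integrable D (EFin \o f) -> mu.-integrable D (EFin \o (fun x => a * f x + c)%R).
Proof.
move=> mD fi.
rewrite (_ : _ \o _ = (fun x => a%:E * (f x)%:E) \+ (EFin \o cst c)).
  apply: integrableD => //; first exact: integrableZl.
  exact: finite_measure_integrable_cst.
by apply/funext => x; rewrite /= EFinD EFinM.
Qed.

Lemma integral_affine (a c : R) (f : T -> R) (D : set T) : measurable D ->
  mu.-integrable D (EFin \o f) ->
  \int[mu]_(x in D) (a * f x + c)%:E =
    a%:E * \int[mu]_(x in D) (f x)%:E + c%:E * mu D.
Proof.
move=> mD fi; under eq_integral do rewrite EFinD EFinM.
rewrite integralD //; last 2 first.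
- exact: integrableZl.
- exact: finite_measure_integrable_cst.
by rewrite integralZl // integral_cst // muleC.
Qed.

End finite_measure_integral.

Section with_density.
Local Open Scope ereal_scope.
Context d (T : measurableType d) (R : realType).
Variable mu : {measure set T -> \bar R}.

(* The proof arguments make the measure instances below canonical. *)
Definition with_density (f : T -> R) (mf : measurable_fun [set: T] f)
    (f0 : forall x, (0 <= f x)%R) (fi : mu.-integrable [set: T] (EFin \o f)) :
    set T -> \bar R :=
  fun A => \int[mu]_(x in A) (f x)%:E.

Variables (f : T -> R) (mf : measurable_fun [set: T] f)
  (f0 : forall x, (0 <= f x)%R) (fi : mu.-integrable [set: T] (EFin \o f)).
Local Notation nu := (with_density mf f0 fi).

Let nu0 : nu set0 = 0. Proof. exact: integral_set0. Qed.

Let nu_ge0 A : 0 <= nu A. Proof. by apply: integral_ge0 => x _; rewrite lee_fin. Qed.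

Let nu_sigma_additive : semi_sigma_additive nu.
Proof.
apply: semi_sigma_additive_nng_induced; first exact/measurable_EFinP.
by move=> x; rewrite lee_fin.
Qed.

HB.instance Definition _ := isMeasure.Build _ _ _ nu nu0 nu_ge0 nu_sigma_additive.

Let nu_fin : fin_num_fun nu.
Proof. by move=> A mA; apply: integrable_fin_num => //; exact: integrableS fi. Qed.

HB.instance Definition _ := Measure_isFinite.Build _ _ _ nu nu_fin.

Lemma with_density_dominates : nu `<< mu.
Proof.
apply/null_content_dominatesP => A mA muA0; rewrite /nu /with_density.
by rewrite null_set_integral //; exact/measurable_funTS/measurable_EFinP.
Qed.

End with_density.

Lemma mnormalize_mass1 d (T : measurableType d) (R : realType)
    (mu : {measure set T -> \bar R}) (P : probability T R) :
  (mu [set: T] = 1)%E -> mnormalize mu P = mu.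
Proof.
by move=> mu1; apply/funext => A; rewrite /mnormalize mu1 onee_eq0 /= invr1 mule1.
Qed.

Section density_change.
Local Open Scope ereal_scope.
Context d (T : measurableType d) (R : realType).
Variables (mu : {sigma_finite_measure set T -> \bar R})
  (nu : {finite_measure set T -> \bar R}) (f : T -> R).
Hypothesis mf : measurable_fun [set: T] f.
Hypothesis nuf : forall A, measurable A -> nu A = \int[mu]_(x in A) (f x)%:E.

Lemma ge0_integral_density (phi : T -> \bar R) :
  measurable_fun [set: T] phi -> (forall x, 0 <= phi x) ->
  \int[nu]_x phi x = \int[mu]_x (phi x * (f x)%:E).
Proof.
move=> mphi phi0.
have numu : nu `<< mu.
  apply/null_content_dominatesP => A mA muA0.
  by rewrite nuf // null_set_integral //; exact/measurable_funTS/measurable_EFinP.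
have RNi := Radon_Nikodym_SigmaFinite.f_integrable numu.
rewrite -(Radon_Nikodym_SigmaFinite.change_of_variables numu phi0 measurableT mphi).
apply: ae_eq_integral => //.
- by apply: emeasurable_funM => //; exact: measurable_int RNi.
- by apply: emeasurable_funM => //; exact/measurable_EFinP.
apply: ae_eqe_mul2l; apply: integral_ae_eq => //; first exact/measurable_EFinP.
by move=> A _ mA; rewrite -Radon_Nikodym_SigmaFinite.f_integral // nuf.
Qed.

End density_change.

Section coarsening.
Local Open Scope ereal_scope.
Context (T : pointedType) (B E : set (set T)) (R : realType).
Local Notation TB := (g_sigma_algebraType B).
Local Notation TE := (g_sigma_algebraType E).
Variable EB : E `<=` <<s B >>.

Lemma measurable_coarsen (A : set TE) : measurable A -> measurable (A : set TB).
Proof. by apply: smallest_sub; [exact: smallest_sigma_algebra|]. Qed.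

Lemma measurable_fun_coarsen d (Y : measurableType d) (f : T -> Y) :
  measurable_fun [set: TE] f -> measurable_fun [set: TB] f.
Proof. by move=> mf _ A mA; apply: measurable_coarsen; exact: mf. Qed.

(* [EB] is an argument only so that the instances below can be found by
   unification. *)
Definition coarsen (EB : E `<=` <<s B >>) (mu : set TB -> \bar R) :
  set TE -> \bar R := mu.

Section coarsen_measure.
Variable mu : {measure set TB -> \bar R}.

Let coarsen0 : coarsen EB mu set0 = 0. Proof. exact: measure0. Qed.

Let coarsen_ge0 A : 0 <= coarsen EB mu A. Proof. exact: measure_ge0. Qed.

Let coarsen_sigma_additive : semi_sigma_additive (coarsen EB mu).
Proof.
move=> F mF tF mUF; apply: (@measure_semi_sigma_additive _ TB R mu F) => //.
- by move=> n; exact: measurable_coarsen.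
- exact: measurable_coarsen.
Qed.

HB.instance Definition _ := isMeasure.Build _ _ _ (coarsen EB mu)
  coarsen0 coarsen_ge0 coarsen_sigma_additive.

End coarsen_measure.

Section coarsen_finite_measure.
Variable mu : {finite_measure set TB -> \bar R}.

Let coarsen_fin : fin_num_fun (coarsen EB mu).
Proof. by move=> A mA; apply: fin_num_measure; exact: measurable_coarsen. Qed.

HB.instance Definition _ := Measure_isFinite.Build _ _ _ (coarsen EB mu) coarsen_fin.

End coarsen_finite_measure.

Section coarsen_probability.
Variable P : probability TB R.

Let coarsen_setT : coarsen EB P [set: TE] = 1.
Proof. exact: probability_setT. Qed.

HB.instance Definition _ :=
  Measure_isProbability.Build _ _ _ (coarsen EB P) coarsen_setT.

End coarsen_probability.

Let measurable_id : measurable_fun [set: TB] (id : TB -> TE).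
Proof. by move=> _ A mA; rewrite setTI; exact: measurable_coarsen. Qed.

Variable mu : {measure set TB -> \bar R}.

Lemma ge0_integral_coarsen (D : set TE) (f : T -> \bar R) :
  measurable D -> measurable_fun [set: TE] f -> (forall x, 0 <= f x) ->
  \int[coarsen EB mu]_(x in D) f x = \int[mu]_(x in D) f x.
Proof.
move=> mD mf f0.
exact: (ge0_integral_pushforward measurable_id mu mD (measurable_funTS mf)).
Qed.

Lemma integrable_coarsen (D : set TE) (f : T -> \bar R) :
  measurable D -> measurable_fun [set: TE] f -> mu.-integrable D f ->
  (coarsen EB mu).-integrable D f.
Proof. by move=> mD mf fi; exact: (integrable_pushforward measurable_id mf fi). Qed.

Lemma integral_coarsen (D : set TE) (f : T -> \bar R) :
  measurable D -> measurable_fun [set: TE] f -> mu.-integrable D f ->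
  \int[coarsen EB mu]_(x in D) f x = \int[mu]_(x in D) f x.
Proof. by move=> mD mf fi; exact: (integral_pushforward measurable_id mf fi). Qed.

Lemma ae_coarsen (p : T -> Prop) :
  {ae coarsen EB mu, forall x, p x} -> {ae mu, forall x, p x}.
Proof.
by move=> [N [mN muN pN]]; exists N; split => //; exact: measurable_coarsen.
Qed.

Lemma coarsen_dominates (nu : set TB -> \bar R) :
  nu `<< mu -> coarsen EB nu `<< coarsen EB mu.
Proof.
move/null_content_dominatesP => numu; apply/null_content_dominatesP => A mA.
exact: numu (measurable_coarsen mA).
Qed.

End coarsening.

Section conditional_expectation.
Local Open Scope ereal_scope.
Context (T : pointedType) (B E : set (set T)) (R : realType).
Local Notation TB := (g_sigma_algebraType B).
Local Notation TE := (g_sigma_algebraType E).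
Variables (EB : E `<=` <<s B >>) (P : probability TB R).

Definition is_cond_exp (h hb : T -> R) :=
  [/\ measurable_fun [set: TE] hb, P.-integrable [set: TB] (EFin \o hb) &
    forall X : set TE, measurable X ->
      \int[P]_(x in X) (hb x)%:E = \int[P]_(x in X) (h x)%:E].

Lemma is_cond_exp_affine (a c : R) (h hb : T -> R) :
  P.-integrable [set: TB] (EFin \o h) -> is_cond_exp h hb ->
  is_cond_exp (fun x => a * h x + c)%R (fun x => a * hb x + c)%R.
Proof.
move=> hi [mhb hbi hbh]; split.
- by apply: measurable_funD => //; exact: measurable_funM.
- exact: integrable_affine.
- move=> X mX; have mXB := measurable_coarsen EB mX.
  by rewrite !integral_affine ?hbh //; exact: integrableS measurableT mXB (subsetT _) _.
Qed.

Lemma cond_exp_ge0 (h hb : T -> R) (mh : measurable_fun [set: TB] h)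
    (h0 : forall x, (0 <= h x)%R) (hi : P.-integrable [set: TB] (EFin \o h)) :
  is_cond_exp h hb -> {ae P, forall x, (0 <= hb x)%R}.
Proof.
move=> [mhb hbi hbh].
pose la := with_density mh h0 hi.
have laPE : coarsen EB la `<< coarsen EB P.
  exact/coarsen_dominates/with_density_dominates.
(* the density of (h P)|E with respect to P|E is a nonnegative version of hb *)
pose r := Radon_Nikodym_SigmaFinite.f (coarsen EB la) (coarsen EB P).
have hbr : ae_eq (coarsen EB P) [set: TE] (EFin \o hb) r.
  apply: integral_ae_eq => //.
  - apply: integrable_coarsen => //; exact/measurable_EFinP.
  - exact: measurable_int (Radon_Nikodym_SigmaFinite.f_integrable laPE).
  move=> X _ mX; rewrite -Radon_Nikodym_SigmaFinite.f_integral //.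
  rewrite integral_coarsen //; last first.
  - exact: integrableS measurableT (measurable_coarsen EB mX) (subsetT _) hbi.
  - exact/measurable_EFinP.
  by rewrite hbh.
apply: (@ae_coarsen _ _ _ _ EB P (fun x => 0 <= hb x)%R).
apply: filterS hbr => x /(_ I) /= hbx.
by rewrite -lee_fin hbx; exact: Radon_Nikodym_SigmaFinite.f_ge0.
Qed.

Lemma cond_exp_bounded (M : R) (h hb : T -> R) :
  measurable_fun [set: TB] h -> (forall x, (`|h x| <= M)%R) ->
  is_cond_exp h hb -> {ae P, forall x, (`|hb x| <= M)%R}.
Proof.
move=> mh hM hce; have hi := bounded_integrable P mh hM.
have cond_exp_shift (a : R) : `|a|%R = 1%R ->
    {ae P, forall x, (0 <= a * hb x + M)%R}.
  move=> a1; apply: (cond_exp_ge0 (h := fun x => a * h x + M)%R).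
  - by apply: measurable_funD => //; exact: measurable_funM.
  - move=> x; have := hM x; rewrite -[`|h x|%R]mul1r -a1 -normrM.
    by rewrite ler_norml => /andP[]; lra.
  - exact: integrable_affine.
  - exact: is_cond_exp_affine.
apply: (@filterS2 _ _ (ae_filter_ringOfSetsType P) _ _ _ _
  (cond_exp_shift 1%R (normr1 _)) (cond_exp_shift (-1)%R _)).
  by move=> x; rewrite ler_norml; lra.
by rewrite normrN normr1.
Qed.

Lemma cond_exp_bounded_version (M : R) (h hb : T -> R) :
  measurable_fun [set: TB] h -> (forall x, (`|h x| <= M)%R) ->
  is_cond_exp h hb ->
  exists hb' : T -> R, [/\ is_cond_exp h hb', forall x, (`|hb' x| <= M)%R &
    ae_eq P [set: TB] (EFin \o hb) (EFin \o hb')].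
Proof.
move=> mh hM hce; have M0 : (0 <= M)%R := le_trans (normr_ge0 _) (hM point).
have [mhb hbi hbh] := hce.
pose clamp (y : R) := Num.max (- M)%R (Num.min M y).
have clamp_bounded y : (`|clamp y| <= M)%R.
  rewrite ler_norml ge_max le_max lexx /= ge_min lexx /=.
  by apply/andP; split; lra.
have clamp_id y : (`|y| <= M)%R -> clamp y = y.
  by rewrite ler_norml => /andP[My yM]; rewrite /clamp (min_r yM) (max_r My).
have hbE : ae_eq P [set: TB] (EFin \o hb) (EFin \o (clamp \o hb)).
  apply: (@filterS _ _ (ae_filter_ringOfSetsType P) _ _ _
    (cond_exp_bounded mh hM hce)) => x hbM _.
  by rewrite /= clamp_id.
have mclamp : measurable_fun [set: TE] (clamp \o hb).
  by apply: measurable_maxr => //; exact: measurable_minr.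
have hbM' x : (`|(clamp \o hb) x| <= M)%R by exact: clamp_bounded.
have mclampB := measurable_fun_coarsen EB mclamp.
exists (clamp \o hb); split => //; split => //.
  by apply: (bounded_integrable P mclampB).
move=> X mX; rewrite -hbh //; apply: ae_eq_integral.
- exact: measurable_coarsen.
- by apply: measurable_funTS; exact/measurable_EFinP.
- apply: measurable_funTS; apply/measurable_EFinP.
  by have := measurable_fun_coarsen EB mhb.
- exact: ae_eq_subset (subsetT _) (ae_eq_sym hbE).
Qed.

Lemma ge0_integral_mul_cond_exp (h hb : T -> R) (mh : measurable_fun [set: TB] h)
    (h0 : forall x, (0 <= h x)%R) (hi : P.-integrable [set: TB] (EFin \o h)) :
  (forall x, (0 <= hb x)%R) -> is_cond_exp h hb ->
  forall phi : T -> \bar R, measurable_fun [set: TE] phi -> (forall x, 0 <= phi x) ->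
  \int[P]_x (phi x * (h x)%:E) = \int[P]_x (phi x * (hb x)%:E).
Proof.
move=> hb0 [mhb _ hbh] phi mphi phi0.
pose la := with_density mh h0 hi.
have la_density (X : set TE) : measurable X ->
    coarsen EB la X = \int[coarsen EB P]_(x in X) (hb x)%:E.
  move=> mX; rewrite ge0_integral_coarsen //; last exact/measurable_EFinP.
  by rewrite hbh.
have mphiB := measurable_fun_coarsen EB mphi.
rewrite -(ge0_integral_density (nu := la)) //.
rewrite -(ge0_integral_coarsen EB la) //.
rewrite (ge0_integral_density (mu := coarsen EB P) (nu := coarsen EB la) (f := hb)) //.
rewrite ge0_integral_coarsen //; last by move=> x; rewrite mule_ge0 // lee_fin.
by apply: emeasurable_funM => //; exact/measurable_EFinP.
Qed.

Section coarse_density.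
Variables (Q : probability TB R) (QP : Q `<< P).

Let QEPE : coarsen EB Q `<< coarsen EB P := coarsen_dominates QP.

Definition coarse_density (x : T) : R :=
  fine (Radon_Nikodym_SigmaFinite.f (coarsen EB Q) (coarsen EB P) x).

Let coarse_densityK x :
  (coarse_density x)%:E = Radon_Nikodym_SigmaFinite.f (coarsen EB Q) (coarsen EB P) x.
Proof. by rewrite fineK // Radon_Nikodym_SigmaFinite.f_fin_num. Qed.

Lemma coarse_density_ge0 x : (0 <= coarse_density x)%R.
Proof. by rewrite -lee_fin coarse_densityK Radon_Nikodym_SigmaFinite.f_ge0. Qed.

Lemma measurable_coarse_density : measurable_fun [set: TE] coarse_density.
Proof.
apply/measurable_EFinP.
rewrite (_ : _ \o _ =
    Radon_Nikodym_SigmaFinite.f (coarsen EB Q) (coarsen EB P)).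
  exact: measurable_int (Radon_Nikodym_SigmaFinite.f_integrable QEPE).
by apply/funext => x; rewrite /= coarse_densityK.
Qed.

Lemma coarse_densityE (X : set TE) : measurable X ->
  Q X = \int[P]_(x in X) (coarse_density x)%:E.
Proof.
move=> mX; rewrite -ge0_integral_coarsen //; last 2 first.
- by apply/measurable_EFinP; exact: measurable_coarse_density.
- by move=> x; rewrite lee_fin coarse_density_ge0.
under eq_integral do rewrite coarse_densityK.
by rewrite -Radon_Nikodym_SigmaFinite.f_integral.
Qed.

Let measurable_coarse_densityB := measurable_fun_coarsen EB measurable_coarse_density.

Lemma coarse_density_integrable : P.-integrable [set: TB] (EFin \o coarse_density).
Proof.
apply/integrableP; split; first exact/measurable_EFinP.
under eq_integral do rewrite /= ger0_norm ?coarse_density_ge0 //.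
by rewrite -coarse_densityE // probability_setT ltry.
Qed.

(* [mnormalize] is the identity on measures of mass 1 (see [coarse_probE]); it
   only provides the probability structure. *)
Definition coarse_prob : probability TB R :=
  mnormalize (with_density measurable_coarse_densityB coarse_density_ge0
    coarse_density_integrable) P.

Lemma coarse_probE (A : set TB) :
  coarse_prob A = \int[P]_(x in A) (coarse_density x)%:E.
Proof.
rewrite /coarse_prob /= mnormalize_mass1 //.
by rewrite -(probability_setT Q) coarse_densityE.
Qed.

Lemma coarse_prob_coarsen (X : set TE) : measurable X -> coarse_prob X = Q X.
Proof. by move=> mX; rewrite coarse_probE coarse_densityE. Qed.

Lemma ge0_integral_coarse_prob (h hb : T -> R) (mh : measurable_fun [set: TB] h)
    (h0 : forall x, (0 <= h x)%R) (hi : P.-integrable [set: TB] (EFin \o h)) :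
  (forall x, (0 <= hb x)%R) -> is_cond_exp h hb ->
  \int[coarse_prob]_x (h x)%:E = \int[Q]_x (hb x)%:E.
Proof.
move=> hb0 hce; have [mhb _ _] := hce.
have mg : measurable_fun [set: TE] (EFin \o coarse_density).
  by apply/measurable_EFinP; exact: measurable_coarse_density.
have g0 x : 0 <= (coarse_density x)%:E by rewrite lee_fin coarse_density_ge0.
have mhbE : measurable_fun [set: TE] (EFin \o hb) by exact/measurable_EFinP.
have hb0E x : 0 <= (hb x)%:E by rewrite lee_fin.
have coarsen_density (X : set TE) : measurable X ->
    coarsen EB Q X = \int[coarsen EB P]_(x in X) (coarse_density x)%:E.
  by move=> mX; rewrite ge0_integral_coarsen ?coarse_densityE.
have -> : \int[coarse_prob]_x (h x)%:E =
    \int[P]_x ((coarse_density x)%:E * (h x)%:E).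
  rewrite (ge0_integral_density (mu := P) (f := coarse_density)) //.
  - by under eq_integral do rewrite muleC.
  - by move=> A _; exact: coarse_probE.
  - exact/measurable_EFinP.
rewrite (ge0_integral_mul_cond_exp mh h0 hi hb0 hce) //.
rewrite -(ge0_integral_coarsen EB P) //; last 2 first.
- exact: emeasurable_funM.
- by move=> x; rewrite mule_ge0.
under eq_integral do rewrite muleC.
rewrite -(ge0_integral_density (mu := coarsen EB P) (nu := coarsen EB Q)) //.
  exact: ge0_integral_coarsen.
exact: measurable_coarse_density.
Qed.

Lemma integral_coarse_prob (M : R) (h hb : T -> R) :
  measurable_fun [set: TB] h -> (forall x, (`|h x| <= M)%R) ->
  is_cond_exp h hb -> \int[coarse_prob]_x (h x)%:E = \int[Q]_x (hb x)%:E.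
Proof.
move=> mh hM hce.
have [hb' [hce' hbM hbE]] := cond_exp_bounded_version mh hM hce.
have [mhb _ _] := hce.
have [mhb' _ _] := hce'.
have mhb'B : measurable_fun [set: TB] hb'.
  by have := measurable_fun_coarsen EB mhb'.
have hi := bounded_integrable P mh hM.
have mh1 : measurable_fun [set: TB] (fun x => 1 * h x + M)%R.
  by apply: measurable_funD => //; exact: measurable_funM.
have shift_ge0 (f : T -> R) x : (`|f x| <= M)%R -> (0 <= 1 * f x + M)%R.
  by rewrite ler_norml mul1r => /andP[]; lra.
have := ge0_integral_coarse_prob mh1 (fun x => shift_ge0 h x (hM x))
  (integrable_affine 1 M measurableT hi) (fun x => shift_ge0 hb' x (hbM x))
  (is_cond_exp_affine 1 M hi hce').
rewrite !integral_affine //; last 2 first.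
- by apply: (bounded_integrable Q mhb'B).
- by apply: (bounded_integrable coarse_prob mh).
(* the total masses occur through the finite-measure projection, which
   [rewrite probability_setT] does not match *)
rewrite [X in _ + _ * X = _](_ : _ = 1); last exact: probability_setT.
rewrite [X in _ = _ + _ * X](_ : _ = 1); last exact: probability_setT.
rewrite !mul1e !mule1 => /(congr1 (fun z => z - M%:E)).
rewrite !addeK // => ->; apply: ae_eq_integral => //.
- by apply: measurableT_comp.
- by apply: measurableT_comp => //; have := measurable_fun_coarsen EB mhb.
- exact: null_dominates_ae_eq QP (ae_eq_sym hbE).
Qed.

End coarse_density.
End conditional_expectation.

Section divergence.
Local Open Scope ereal_scope.
Variables (R : realType) (tl tu : R) (htlu : (tl < tu)%R).
Local Notation Th := (Theta htlu).
Local Notation B := (borel_Theta htlu).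
Local Notation TB := (g_sigma_algebraType B).

Lemma sub_sigma_borel_Theta : sub_sigma B.
Proof.
split => //; have -> : B = preimage_set_system [set: Th]
    (@proj1_sig R (fun x : R => (tl <= x <= tu)%R)) [set Y : set R | measurable Y].
  by apply/funext => X; apply/propext; split => -[Y mY <-]; exists Y => //;
    rewrite setTI.
exact/sigma_algebra_preimage/sigma_algebra_measurable.
Qed.

Lemma sub_sigma_generated (E : set (set Th)) : sub_sigma E -> E `<=` <<s B >>.
Proof. by move=> [_ EB] X /EB; exact: sub_sigma_algebra. Qed.

Lemma divergence_coarse_prob (D : divergence htlu) (E : set (set Th))
    (hE : sub_sigma E) (P Q : probability TB R) (QP : Q `<< P) :
  assumptionD D -> D _ (coarse_prob (sub_sigma_generated hE) QP) P <= D _ Q P.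
Proof.
move=> HD; have [sigE EB] := hE; set EsB := sub_sigma_generated hE.
have [_ [_ _ _ D4 _]] := HD _ sub_sigma_borel_Theta P Q.
have [_ [_ _ _ _ D5]] := HD _ sub_sigma_borel_Theta P (coarse_prob EsB QP).
rewrite -(D5 E sigE EB (coarsen EsB Q) (coarsen EsB P)) //.
- exact: D4.
- by move=> X EX; rewrite /coarsen coarse_prob_coarsen //; exact: sub_sigma_algebra.
- exists (coarse_density EsB P Q); split.
  + exact: measurable_coarse_density.
  + exact: coarse_density_ge0.
  + by move=> X _; exact: coarse_probE.
Qed.

End divergence.

Theorem proposition2 (R : realType) (tl tu : R) (htl : 0 < tl) (htlu : tl < tu)
  (D : divergence htlu) (HD : assumptionD D)
  (P : probability (g_sigma_algebraType (borel_Theta htlu)) R)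
  (eta : R) (heta : 0 < eta)
  (pi : Theta htlu -> R) (hpib : exists M : R, forall x, `|pi x| <= M)
  (hpim : measurable_fun [set: g_sigma_algebraType (borel_Theta htlu)] pi)
  (E : set (set (Theta htlu))) (hE : sub_sigma E)
  (pibar : Theta htlu -> R) (hpibar : cond_exp P E pi pibar) :
  (ereal_inf [set (\int[Q]_x (pibar x)%:E)%E
     | Q in [set Q : probability (g_sigma_algebraType (borel_Theta htlu)) R
              | (D _ Q P <= eta%:E)%E]]
   >= ereal_inf [set (\int[Q]_x (pi x)%:E)%E
     | Q in [set Q : probability (g_sigma_algebraType (borel_Theta htlu)) R
              | (D _ Q P <= eta%:E)%E]])%E.
Proof.
have [M piM] := hpib; pose EsB := sub_sigma_generated hE.
have pibar_cond_exp : is_cond_exp E P pi pibar.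
  have [mpb ipb cpb] := hpibar; split => // X mX; apply: cpb.
  by move: (mX : <<s E >> X); rewrite sigma_algebra_id //; exact: hE.1.
apply: le_ereal_inf_tmp => _ [Q DQ <-].
have [_ [_ _ D3 _ _]] := HD _ (sub_sigma_borel_Theta htlu) P Q.
have QP : Q `<< P by apply: D3; exact: le_lt_trans DQ (ltry _).
apply: ereal_inf_lbound; exists (coarse_prob EsB QP).
  exact: le_trans (divergence_coarse_prob hE QP HD) DQ.
exact: (integral_coarse_prob EsB QP hpim piM pibar_cond_exp).
Qed.
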